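(* In the standing setup, if $g=B^{\rm T}f_0$ is associated to $f_0$ via $B=\alpha I+\beta A+\gamma A^2$ with $B^2=I$, then $\det(I-\varepsilon g'(x))=\det(I-\varepsilon f_0'(x))$ for all $x\in\mathbb R^6$ and all $\varepsilon\in\mathbb R$.
   Context: Standing setup: $J=\begin{pmatrix}0&I_3\\-I_3&0\end{pmatrix}$ ($6\times6$). $A$ is a fixed real $6\times 6$ skew-Hamiltonian matrix, i.e. $A^{\rm T}J=JA$. $H_0$ is a homogeneous cubic polynomial on $\mathbb R^6$ with $A\nabla^2H_0(x)=\nabla^2H_0(x)A^{\rm T}$ for all $x$ ($\nabla^2$ = Hesse matrix), and $H_1,H_2$ are homogeneous cubic polynomials with $\nabla H_1=A\nabla H_0$, $\nabla H_2=A\nabla H_1$. Set $f_i=J\nabla H_i$; primes denote Jacobi matrices. Associated vector field: if $B=\alpha I+\beta A+\gamma A^2$ satisfies $B^2=I$, then $g(x)=B^{\rm T}f_0(x)$ is called associated to $f_0$. *)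

From HB Require Import structures.
From mathcomp Require Import all_boot all_order all_algebra.
Set Implicit Arguments. Unset Strict Implicit. Unset Printing Implicit Defensive.
Import Order.TTheory GRing.Theory Num.Theory.
Local Open Scope ring_scope.

Definition Jmat (R : pzRingType) : 'M[R]_6 :=
  block_mx (0 : 'M[R]_(3,3)) 1%:M (- 1%:M) 0.

(* A homogeneous cubic polynomial on R^6, given by its (not necessarily
   symmetric) coefficient tensor: H(x) = sum_{i,j,k} c i j k x_i x_j x_k.
   Every homogeneous cubic is of this form. *)
Definition cubic (R : pzRingType) := 'I_6 -> 'I_6 -> 'I_6 -> R.

Definition evalC (R : pzRingType) (c : cubic R) (x : 'cV[R]_6) : R :=
  \sum_(i < 6) \sum_(j < 6) \sum_(k < 6) c i j k * x i 0 * x j 0 * x k 0.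

Definition quadf (R : pzRingType) := 'I_6 -> 'I_6 -> 'I_6 -> R.

Definition evalQ (R : pzRingType) (q : quadf R) (x : 'cV[R]_6) : 'cV[R]_6 :=
  \col_(i < 6) \sum_(j < 6) \sum_(k < 6) q i j k * x j 0 * x k 0.

(* Gradient of a cubic (exact formal partial derivatives):
   d/dx_l (sum c a b d x_a x_b x_d) = sum_{j,k} (c l j k + c j l k + c j k l) x_j x_k *)
Definition gradC (R : pzRingType) (c : cubic R) : quadf R :=
  fun l j k => c l j k + c j l k + c j k l.

(* Jacobi matrix of a quadratic vector field (exact formal derivative):
   d f_i / d x_l = sum_k (q i l k + q i k l) x_k *)
Definition jacQ (R : pzRingType) (q : quadf R) (x : 'cV[R]_6) : 'M[R]_6 :=
  \matrix_(i < 6, l < 6) \sum_(k < 6) (q i l k + q i k l) * x k 0.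

Definition hessC (R : pzRingType) (c : cubic R) (x : 'cV[R]_6) : 'M[R]_6 :=
  jacQ (gradC c) x.

Definition mulQ (R : pzRingType) (M : 'M[R]_6) (q : quadf R) : quadf R :=
  fun i j k => \sum_(m < 6) M i m * q m j k.



Definition hamf (R : pzRingType) (H : cubic R) : quadf R := mulQ (Jmat R) (gradC H).

(* Put C := B^T and M := f_0'(x) = J S with S the (symmetric) Hesse matrix of
   H_0. Then C is an involution commuting with M, M is Hamiltonian
   (M^T J = - J M) and C^T J = J C. With the projection Q := (1 - C)/2 one has
   C M = M - 2 Q M and (M - Q M) Q M = 0, whence
     1 - e C M = (1 - e (M - Q M)) (1 + e Q M),
     1 - e M   = (1 - e (M - Q M)) (1 - e Q M).
   Finally Q M is again Hamiltonian, and for a Hamiltonian X the identity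
   (1 - e X)^T J = J (1 + e X) gives det (1 + e X) = det (1 - e X). *)

From HB Require Import structures.
From mathcomp Require Import all_boot all_order all_algebra.
From mathcomp Require Import ring.
Set Implicit Arguments.
Unset Strict Implicit.
Unset Printing Implicit Defensive.
Import Order.TTheory GRing.Theory Num.Theory.
Local Open Scope ring_scope.

Definition hamiltonian_mx {R : pzRingType} {n} (J X : 'M[R]_n) :=
  X^T *m J = - (J *m X).

Definition skew_hamiltonian_mx {R : pzRingType} {n} (J X : 'M[R]_n) :=
  X^T *m J = J *m X.

Section HamiltonianMatrices.
Variables (R : comPzRingType) (n : nat) (J : 'M[R]_n).

Lemma hamiltonian_mx_mul_sym (S : 'M[R]_n) :
  J^T = - J -> J *m J = - 1%:M -> S^T = S -> hamiltonian_mx J (J *m S).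
Proof.
move=> JT JJ ST; rewrite /hamiltonian_mx trmx_mul ST JT mulmxN mulNmx -mulmxA JJ.
by rewrite mulmxA JJ !mulmxN mulmx1 mulNmx mul1mx opprK.
Qed.

Lemma hamiltonian_mx_mull (C M : 'M[R]_n) :
  skew_hamiltonian_mx J C -> hamiltonian_mx J M -> C *m M = M *m C ->
  hamiltonian_mx J (C *m M).
Proof.
move=> hC hM CM; rewrite /hamiltonian_mx trmx_mul -mulmxA hC mulmxA hM.
by rewrite mulNmx -mulmxA -CM mulmxA.
Qed.

Lemma skew_hamiltonian_mx_tr (X : 'M[R]_n) :
  J *m J = - 1%:M -> skew_hamiltonian_mx J X -> skew_hamiltonian_mx J X^T.
Proof.
move=> JJ hX; rewrite /skew_hamiltonian_mx trmxK.
have := congr1 (fun Y => J *m Y *m J) hX; rewrite /= !mulmxA JJ -!mulmxA JJ.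
by rewrite !mulmxN !mulNmx mulmx1 mul1mx => /oppr_inj ->.
Qed.

Lemma trmx_quad (X : 'M[R]_n) a b c :
  (a%:M + b *: X + c *: (X *m X))^T = a%:M + b *: X^T + c *: (X^T *m X^T).
Proof. by rewrite !linearD /= !linearZ /= tr_scalar_mx trmx_mul. Qed.

Lemma quad_mx_intertwine (X Y Z : 'M[R]_n) a b c :
  X *m Z = Z *m Y ->
  (a%:M + b *: X + c *: (X *m X)) *m Z = Z *m (a%:M + b *: Y + c *: (Y *m Y)).
Proof.
move=> XZ; rewrite !mulmxDl !mulmxDr -!scalemxAl -!scalemxAr.
by rewrite mul_scalar_mx mul_mx_scalar -mulmxA XZ !mulmxA XZ.
Qed.

Lemma skew_hamiltonian_mx_quad (X : 'M[R]_n) a b c :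
  skew_hamiltonian_mx J X ->
  skew_hamiltonian_mx J (a%:M + b *: X + c *: (X *m X)).
Proof.
by move=> hX; rewrite /skew_hamiltonian_mx trmx_quad; apply: quad_mx_intertwine.
Qed.

Lemma mulmx_1BZ_1DZ (X Y : 'M[R]_n) a b : X *m Y = 0 ->
  (1%:M - a *: X) *m (1%:M + b *: Y) = 1%:M - a *: X + b *: Y.
Proof.
move=> XY; rewrite mulmxDr mulmx1 mulmxBl mul1mx -scalemxAl -scalemxAr XY.
by rewrite !scaler0 subr0 addrAC.
Qed.

End HamiltonianMatrices.

Section HamiltonianDet.
Variables (R : fieldType) (n : nat) (J : 'M[R]_n).
Hypothesis J_unit : \det J != 0.

Lemma det_1DZ_hamiltonian (X : 'M[R]_n) e : hamiltonian_mx J X ->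
  \det (1%:M + e *: X) = \det (1%:M - e *: X).
Proof.
move=> hX.
have tr_1BZ : (1%:M - e *: X)^T *m J = J *m (1%:M + e *: X).
  rewrite linearB /= tr_scalar_mx linearZ /= mulmxBl mul1mx -scalemxAl hX.
  by rewrite mulmxDr mulmx1 -scalemxAr scalerN opprK.
have := congr1 determinant tr_1BZ; rewrite !det_mulmx det_tr mulrC.
by move/(mulfI J_unit).
Qed.

Lemma det_1BZ_involution_mull (C M : 'M[R]_n) e :
  (2 : R) != 0 -> skew_hamiltonian_mx J C -> hamiltonian_mx J M ->
  C *m C = 1%:M -> C *m M = M *m C ->
  \det (1%:M - e *: (C *m M)) = \det (1%:M - e *: M).
Proof.
move=> two_neq0 skC hM CC CM.
set Q := 2^-1 *: (1%:M - C).
have QQ : Q *m Q = Q.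
  rewrite -scalemxAl -scalemxAr scalerA !(mulmxBl, mulmxBr) !(mul1mx, mulmx1).
  by rewrite CC opprB -mulr2n -scaler_nat scalerA mulfVK.
have QM : Q *m M = M *m Q.
  by rewrite -scalemxAl -scalemxAr mulmxBl mulmxBr mul1mx mulmx1 CM.
have C_Q : C = 1%:M - Q - Q.
  rewrite -addrA -opprD -mulr2n -scaler_nat scalerA divff // scale1r.
  by rewrite opprB addrC subrK.
have skQ : skew_hamiltonian_mx J Q.
  rewrite /skew_hamiltonian_mx linearZ /= -scalemxAl -scalemxAr linearB /=.
  by rewrite tr_scalar_mx mulmxBl mulmxBr mul1mx mulmx1 skC.
have PM_QM : (M - Q *m M) *m (Q *m M) = 0.
  rewrite -{1}(mul1mx M) -mulmxBl mulmxA -(mulmxA _ M) -QM mulmxA mulmxBl.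
  by rewrite mul1mx QQ subrr !mul0mx.
have -> : 1%:M - e *: (C *m M) =
          (1%:M - e *: (M - Q *m M)) *m (1%:M + e *: (Q *m M)).
  rewrite mulmx_1BZ_1DZ // C_Q !mulmxBl mul1mx.
  by rewrite [e *: (_ - _ - _)]scalerBr opprD opprK addrA.
have -> : 1%:M - e *: M =
          (1%:M - e *: (M - Q *m M)) *m (1%:M + - e *: (Q *m M)).
  by rewrite mulmx_1BZ_1DZ // scalerBr scaleNr opprB addrA addrAC addrK.
rewrite !det_mulmx scaleNr -/(1%:M - e *: (Q *m M)) det_1DZ_hamiltonian //.
exact: hamiltonian_mx_mull.
Qed.

End HamiltonianDet.

Lemma Jmat_tr (R : pzRingType) : (Jmat R)^T = - Jmat R.
Proof.
change ((Jmat R : 'M_(3 + 3))^T = - (Jmat R : 'M_(3 + 3))).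
rewrite /Jmat tr_block_mx !trmx0 raddfN /= !tr_scalar_mx.
by rewrite opp_block_mx !oppr0 opprK.
Qed.

Lemma Jmat_mulmx_Jmat (R : pzRingType) : Jmat R *m Jmat R = - 1%:M.
Proof.
change ((Jmat R : 'M_(3 + 3)) *m (Jmat R : 'M_(3 + 3)) = - 1%:M).
rewrite /Jmat mulmx_block !mulmx0 !mul0mx !mulmx1 !addr0 !add0r.
by rewrite (scalar_mx_block 3 3 1) opp_block_mx oppr0 mul1mx.
Qed.

Lemma det_Jmat_neq0 (R : fieldType) : \det (Jmat R) != 0.
Proof.
apply/eqP => detJ0; have := congr1 determinant (Jmat_mulmx_Jmat R).
rewrite det_mulmx detJ0 mul0r -scaleN1r detZ det1 mulr1.
by move/esym/eqP; rewrite expf_eq0 oppr_eq0 oner_eq0 andbF.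
Qed.

Lemma jacQ_mulQ (R : comPzRingType) (M : 'M[R]_6) (q : quadf R) x :
  jacQ (mulQ M q) x = M *m jacQ q x.
Proof.
apply/matrixP=> i l; rewrite !mxE.
under eq_bigr => k _ do rewrite /mulQ -big_split /= big_distrl /=.
rewrite exchange_big /=; apply: eq_bigr => m _; rewrite mxE big_distrr /=.
by apply: eq_bigr => k _; rewrite -mulrDr mulrA.
Qed.

Lemma hessC_sym (R : comPzRingType) (c : cubic R) x : (hessC c x)^T = hessC c x.
Proof.
apply/matrixP=> i l; rewrite !mxE; apply: eq_bigr => k _.
by rewrite /gradC; congr (_ * _); ring.
Qed.

Theorem mainTheorem5 (R : realFieldType) (A : 'M[R]_6) (H0 H1 H2 : cubic R)
  (alpha beta gamma : R)
  (hA : A^T *m Jmat R = Jmat R *m A)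
  (hH0 : forall x : 'cV[R]_6, A *m hessC H0 x = hessC H0 x *m A^T)
  (hH1 : forall x : 'cV[R]_6, evalQ (gradC H1) x = A *m evalQ (gradC H0) x)
  (hH2 : forall x : 'cV[R]_6, evalQ (gradC H2) x = A *m evalQ (gradC H1) x)
  (hB : (alpha%:M + beta *: A + gamma *: (A *m A)) *m
        (alpha%:M + beta *: A + gamma *: (A *m A)) = 1%:M) :
  let B := alpha%:M + beta *: A + gamma *: (A *m A) in
  let g := mulQ B^T (hamf H0) in
  forall (x : 'cV[R]_6) (eps : R),
    \det (1%:M - eps *: jacQ g x) = \det (1%:M - eps *: jacQ (hamf H0) x).
Proof.
move=> B g x eps; rewrite /g /hamf !jacQ_mulQ.
set J := Jmat R; set S := hessC H0 x.
have skB : skew_hamiltonian_mx J B by apply: skew_hamiltonian_mx_quad.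
have BS : B *m S = S *m B^T.
  by rewrite /B trmx_quad; apply: (quad_mx_intertwine _ _ _ (hH0 x)).
apply: (det_1BZ_involution_mull (det_Jmat_neq0 R)).
- by rewrite pnatr_eq0.
- exact: skew_hamiltonian_mx_tr (Jmat_mulmx_Jmat R) skB.
- exact: (hamiltonian_mx_mul_sym (Jmat_tr R) (Jmat_mulmx_Jmat R) (hessC_sym H0 x)).
- by rewrite -trmx_mul hB tr_scalar_mx.
- by rewrite mulmxA skB -mulmxA BS mulmxA.
Qed.
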